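(* For every real $y\ge0$, $\displaystyle\sum_{k,\ell\in\mathbb{N}}\frac{y^{k\ell}}{(k!)^\ell\,\ell!}<\infty$. Moreover, $\displaystyle\sum_{k,\ell\in\mathbb{N}}\frac{1}{(k!)^\ell\,\ell!}\le e^2$.
   Context: $\mathbb{N}=\{1,2,3,\dots\}$. *)

From Stdlib Require Import Reals Factorial.
Open Scope R_scope.

(* Term of the double series, for k, l in N = {1,2,3,...}:
   y^(k l) / ((k!)^l * l!). *)
Definition dterm (y : R) (k l : nat) : R :=
  y ^ (k * l) / ((INR (fact k)) ^ l * INR (fact l)).

(* Finite partial sum over the square 1 <= k <= N, 1 <= l <= N.
   sum_f_R0 f n = f 0 + ... + f n, so we shift indices by one. *)
Definition dpartial (y : R) (N : nat) : R :=
  match N with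
  | O => 0
  | S n => sum_f_R0 (fun i => sum_f_R0 (fun j => dterm y (S i) (S j)) n) n
  end.

(* Write a_k = y^k / k!, so that the (k, l) term is a_k^l / l!.  If a_k <= B
   for all k with B >= 1, then a_k^l <= a_k B^l, and the double series is
   dominated termwise by the product (sum_k a_k) (sum_l B^l / l!), which is at
   most e^y e^B.  One may always take B = e^y; for y = 1 one may take B = 1,
   since 1/k! <= 1, which gives the bound e * e = e^2. *)

From Stdlib Require Import Reals Lra Lia Factorial.
Open Scope R_scope.

Lemma inv_INR_fact_le_1 (k : nat) : / INR (fact k) <= 1.
Proof.
  rewrite <- Rinv_1; apply Rinv_le_contravar; [lra|].
  change 1 with (INR 1); apply le_INR.
  pose proof (lt_O_fact k); lia.
Qed.

Section ExpPartialSums.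

Variable x : R.
Hypothesis x_ge0 : 0 <= x.

Lemma exp_term_ge0 (i : nat) : 0 <= x ^ i / INR (fact i).
Proof.
  apply Rmult_le_pos; [now apply pow_le|].
  left; apply Rinv_0_lt_compat, INR_fact_lt_0.
Qed.

Lemma exp_partial_sum_le (n : nat) :
  sum_f_R0 (fun i => x ^ i / INR (fact i)) n <= exp x.
Proof.
  rewrite (sum_eq _ (fun i => / INR (fact i) * x ^ i)) by (intros; unfold Rdiv; ring).
  unfold exp; destruct (exist_exp x) as [l exp_x]; simpl.
  apply growing_ineq; [|exact exp_x].
  intro m; rewrite tech5.
  pose proof (exp_term_ge0 (S m)); unfold Rdiv in *; lra.
Qed.

Lemma exp_tail_sum_le (n : nat) :
  sum_f_R0 (fun i => x ^ S i / INR (fact (S i))) n <= exp x - 1.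
Proof.
  pose proof (exp_partial_sum_le (S n)) as partial_le.
  rewrite (decomp_sum _ (S n)) in partial_le by lia.
  simpl in partial_le |- *; lra.
Qed.

Lemma exp_term_le (k : nat) : x ^ k / INR (fact k) <= exp x.
Proof.
  apply Rle_trans with (sum_f_R0 (fun i => x ^ i / INR (fact i)) k);
    [|apply exp_partial_sum_le].
  destruct k as [|k]; [apply Rle_refl|].
  rewrite tech5; pose proof (cond_pos_sum _ k exp_term_ge0); lra.
Qed.

End ExpPartialSums.

Lemma pow_succ_le_mul_pow (a B : R) (l : nat) :
  0 <= a -> a <= B -> 1 <= B -> a ^ S l <= a * B ^ S l.
Proof.
  intros a_ge0 a_le_B B_ge1.
  apply Rmult_le_compat_l; [exact a_ge0|].
  apply Rle_trans with (B ^ l); [apply pow_incr; lra|].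
  pose proof (pow_le B l); simpl; nra.
Qed.

Lemma sum_f_R0_mul_sum (a b : nat -> R) (m n : nat) :
  sum_f_R0 (fun i => sum_f_R0 (fun j => a i * b j) n) m
  = sum_f_R0 a m * sum_f_R0 b n.
Proof.
  rewrite Rmult_comm, scal_sum.
  apply sum_eq; intros i _.
  rewrite scal_sum; apply sum_eq; intros; ring.
Qed.

Lemma dterm_eq_pow (y : R) (k l : nat) :
  dterm y k l = (y ^ k / INR (fact k)) ^ l / INR (fact l).
Proof.
  pose proof (INR_fact_lt_0 k).
  unfold dterm, Rdiv.
  rewrite pow_mult, Rpow_mult_distr, pow_inv, Rinv_mult by lra.
  ring.
Qed.

Lemma dterm_le (y B : R) (k l : nat) :
  0 <= y -> 1 <= B -> y ^ k / INR (fact k) <= B ->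
  dterm y k (S l) <= (y ^ k / INR (fact k)) * (B ^ S l / INR (fact (S l))).
Proof.
  intros y_ge0 B_ge1 term_le_B.
  rewrite dterm_eq_pow.
  pose proof (exp_term_ge0 y y_ge0 k).
  set (a := y ^ k / INR (fact k)) in *.
  unfold Rdiv; rewrite <- Rmult_assoc.
  apply Rmult_le_compat_r; [left; apply Rinv_0_lt_compat, INR_fact_lt_0|].
  now apply pow_succ_le_mul_pow.
Qed.

Lemma dpartial_le_exp_mul_exp (y B : R) (N : nat) :
  0 <= y -> 1 <= B -> (forall k, y ^ S k / INR (fact (S k)) <= B) ->
  dpartial y N <= exp y * exp B.
Proof.
  intros y_ge0 B_ge1 terms_le_B.
  pose proof (exp_pos y); pose proof (exp_pos B).
  destruct N as [|n]; simpl dpartial; [nra|].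
  set (a i := y ^ S i / INR (fact (S i))).
  set (b j := B ^ S j / INR (fact (S j))).
  apply Rle_trans with (sum_f_R0 a n * sum_f_R0 b n).
  - rewrite <- sum_f_R0_mul_sum.
    apply sum_Rle; intros i _; apply sum_Rle; intros j _.
    now apply dterm_le.
  - assert (0 <= sum_f_R0 a n) by (apply cond_pos_sum; intro; apply exp_term_ge0; lra).
    assert (sum_f_R0 a n <= exp y - 1) by (apply exp_tail_sum_le; lra).
    assert (sum_f_R0 b n <= exp B - 1) by (apply exp_tail_sum_le; lra).
    nra.
Qed.

(* Terms are nonnegative, so the double sum over N x N is the supremum of the
   partial sums over the cofinal family of squares [1,N]^2. *)
Theorem lemma6p1 :
  (forall y : R, 0 <= y -> exists M : R, forall N : nat, dpartial y N <= M) /\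
  (forall N : nat, dpartial 1 N <= exp 2).
Proof.
  split.
  - intros y y_ge0; exists (exp y * exp (exp y)); intro N.
    apply dpartial_le_exp_mul_exp; [exact y_ge0| |intro k; now apply exp_term_le].
    pose proof (exp_ineq1_le y); lra.
  - intro N; replace 2 with (1 + 1) by lra; rewrite exp_plus.
    apply dpartial_le_exp_mul_exp; [lra|lra|].
    intro k; rewrite pow1; unfold Rdiv; rewrite Rmult_1_l.
    apply inv_INR_fact_le_1.
Qed.
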